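(* Let $n = 2k$ with $k \geq 3$. Then no polygon in the family $\mathcal{A}_n$ of alternating polygons can be convexified by pop operations: for every $P \in \mathcal{A}_n$ and every finite sequence of (well-defined) pop operations applied successively starting from $P$, the resulting polygon is not convex.
   Context: A polygon $P = \{p_1, \ldots, p_n\}$ in the plane is a cyclic sequence of points (vertices), joined by edges $p_i p_{i+1}$, with indices taken modulo $n$ (so $p_{n+1} = p_1$, $p_0 = p_n$); it may be simple or self-intersecting. A pop operation at vertex $p_i$ replaces $p_i$ by its reflection with respect to the line through $p_{i-1}$ and $p_{i+1}$, leaving all other vertices unchanged; it is well-defined only when $p_{i-1} \neq p_{i+1}$. A polygon is convex if it is a simple closed polygon whose boundary bounds a convex region. A polygon can be convexified by pops if some finite sequence of well-defined pop operations transforms it into a convex polygon. Alternating polygons: fix coordinates in the plane and let $n = 2k$. Let $\mathbf{x} = (x_1, \ldots, x_k)$ and $\mathbf{y} = (y_1, \ldots, y_k)$ be vectors in $\mathbb{R}^k$ with $x_i > 0$, $y_i > 0$ for all $i$, and $x_i \neq x_j$, $y_i \neq y_j$ for all $i \neq j$. Let $\sigma = (\sigma_1, \ldots, \sigma_{2k}) \in \{-1, +1\}^{2k}$. The polygon $A(\mathbf{x}, \mathbf{y}, \sigma) = \{p_1, \ldots, p_{2k}\}$ is defined by $p_{2i+1} = (\sigma_{2i+1} x_{i+1}, 0)$ for $i = 0, \ldots, k-1$, and $p_{2i} = (0, \sigma_{2i} y_i)$ for $i = 1, \ldots, k$. The family $\mathcal{A}_n = \mathcal{A}_{2k}$ consists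 of all polygons $A(\mathbf{x}, \mathbf{y}, \sigma)$ for all such $\mathbf{x}, \mathbf{y}, \sigma$. *)

From Stdlib Require Import Reals Arith Lia.
Open Scope R_scope.

Definition point : Type := (R * R)%type.

(* A polygon with n vertices is a function P : nat -> point, read modulo n:
   vertex i is P (i mod n), so vertex n = vertex 0 (cyclic indexing). *)
Definition vtx (n : nat) (P : nat -> point) (i : nat) : point := P (i mod n).

Definition cross (u v : point) : R := fst u * snd v - snd u * fst v.
Definition dot (u v : point) : R := fst u * fst v + snd u * snd v.
Definition psub (u v : point) : point := (fst u - fst v, snd u - snd v).

Definition reflect_pt (a b p : point) : point :=
  let d := psub b a in
  let t := dot (psub p a) d / dot d d in
  (2 * (fst a + t * fst d) - fst p, 2 * (snd a + t * snd d) - snd p).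

Definition prev_v (n : nat) (P : nat -> point) (i : nat) : point :=
  vtx n P (i + n - 1).
Definition next_v (n : nat) (P : nat -> point) (i : nat) : point :=
  vtx n P (i + 1).

Definition pop (n : nat) (P : nat -> point) (i : nat) : nat -> point :=
  fun j => if Nat.eqb (j mod n) (i mod n)
           then reflect_pt (prev_v n P i) (next_v n P i) (vtx n P i)
           else P j.

Definition pop_well_defined (n : nat) (P : nat -> point) (i : nat) : Prop :=
  prev_v n P i <> next_v n P i.

Inductive pops_reach (n : nat) (P : nat -> point) : (nat -> point) -> Prop :=
| pops_refl : pops_reach n P P
| pops_step : forall Q i, pops_reach n P Q -> (i < n)%nat ->
    pop_well_defined n Q i -> pops_reach n P (pop n Q i).

Definition on_seg (a b x : point) : Prop :=
  exists t, 0 <= t <= 1 /\ x = (fst a + t * (fst b - fst a), snd a + t * (snd b - snd a)).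

Definition on_edge (n : nat) (P : nat -> point) (i : nat) (x : point) : Prop :=
  on_seg (vtx n P i) (vtx n P (i + 1)) x.

Definition simple_polygon (n : nat) (P : nat -> point) : Prop :=
  (3 <= n)%nat /\
  (forall i j, (i < n)%nat -> (j < n)%nat -> i <> j -> vtx n P i <> vtx n P j) /\
  (forall i x, (i < n)%nat -> on_edge n P i x -> on_edge n P (i + 1) x ->
      x = vtx n P (i + 1)) /\
  (forall i j x, (i < n)%nat -> (j < n)%nat -> i <> j ->
      (i + 1) mod n <> j -> (j + 1) mod n <> i ->
      on_edge n P i x -> on_edge n P j x -> False).

(* Convex polygon: a simple polygon such that, for every edge, all vertices
   lie in one closed half-plane bounded by the line supporting that edge
   (i.e. the simple polygon bounds a convex region). *)
Definition convex_polygon (n : nat) (P : nat -> point) : Prop :=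
  simple_polygon n P /\
  forall i j l, (i < n)%nat -> (j < n)%nat -> (l < n)%nat ->
    0 <= cross (psub (vtx n P (i + 1)) (vtx n P i)) (psub (vtx n P j) (vtx n P i)) *
         cross (psub (vtx n P (i + 1)) (vtx n P i)) (psub (vtx n P l) (vtx n P i)).

(* Alternating polygon A(x, y, sigma) with n = 2k vertices p_1..p_{2k}
   (p_0 = p_{2k}):  p_{2i+1} = (sigma_{2i+1} x_{i+1}, 0),
   p_{2i} = (0, sigma_{2i} y_i).  Vectors x, y are indexed 1..k, sigma 1..2k. *)
Definition alt_polygon (k : nat) (x y sigma : nat -> R) : nat -> point :=
  fun j =>
    let m := (j mod (2 * k))%nat in
    let m' := if Nat.eqb m 0 then (2 * k)%nat else m in
    if Nat.odd m' then (sigma m' * x ((m' + 1) / 2)%nat, 0)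
    else (0, sigma m' * y (m' / 2)%nat).

Definition in_alt_family (k : nat) (P : nat -> point) : Prop :=
  exists x y sigma : nat -> R,
    (forall i, (1 <= i <= k)%nat -> 0 < x i /\ 0 < y i) /\
    (forall i j, (1 <= i <= k)%nat -> (1 <= j <= k)%nat -> i <> j ->
        x i <> x j /\ y i <> y j) /\
    (forall i, (1 <= i <= 2 * k)%nat -> sigma i = 1 \/ sigma i = -1) /\
    P = alt_polygon k x y sigma.

From Stdlib Require Import Reals Arith Lia Lra Psatz.
Open Scope R_scope.

(** Every vertex of an alternating polygon lies on a coordinate axis, its two
    neighbours on the other axis.  A pop therefore reflects a vertex in that
    other axis, i.e. it only negates one entry of the sign vector: the family
    of alternating polygons with fixed [x], [y] is closed under pops.  On the
    other hand no alternating polygon is convex: among the three vertices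
    [p_1], [p_3], [p_5] on the x-axis, whose abscissas have distinct absolute
    values, one lies strictly between the other two, and the line through it
    and its successor on the y-axis separates the other two. *)

Definition axis_point (on_x_axis : bool) (c : R) : point :=
  if on_x_axis then (c, 0) else (0, c).

Lemma reflect_axis_point b c1 c2 c : c1 <> c2 ->
  reflect_pt (axis_point (negb b) c1) (axis_point (negb b) c2) (axis_point b c)
  = axis_point b (- c).
Proof.
  intros Hc. assert (Hd : c2 - c1 <> 0) by lra.
  destruct b; unfold reflect_pt, psub, dot; simpl;
    f_equal; field; intro E; apply Hd; nra.
Qed.

Definition sign_vector (n : nat) (s : nat -> R) : Prop :=
  forall i, (1 <= i <= n)%nat -> s i = 1 \/ s i = -1.

Definition flip_at (s : nat -> R) (m : nat) : nat -> R :=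
  fun t => if Nat.eqb t m then - s t else s t.

Lemma sign_vector_flip_at n s m : sign_vector n s -> sign_vector n (flip_at s m).
Proof.
  intros Hs i Hi. unfold flip_at.
  destruct (Nat.eqb i m); destruct (Hs i Hi) as [E|E]; rewrite E; lra.
Qed.

Lemma signed_neq0 (sg a : R) : sg = 1 \/ sg = -1 -> 0 < a -> sg * a <> 0.
Proof. intros [E|E] Ha; rewrite E; lra. Qed.

Lemma signed_neq (sg tau a b : R) : sg = 1 \/ sg = -1 -> tau = 1 \/ tau = -1 ->
  0 < a -> 0 < b -> a <> b -> sg * a <> tau * b.
Proof. intros [E1|E1] [E2|E2] Ha Hb Hab; rewrite E1, E2; lra. Qed.

Lemma three_distinct_between (a b c : R) : a <> b -> b <> c -> a <> c ->
  (a - b) * (c - b) < 0 \/ (b - a) * (c - a) < 0 \/ (a - c) * (b - c) < 0.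
Proof.
  intros. destruct (Rlt_le_dec a b), (Rlt_le_dec b c), (Rlt_le_dec a c).
  all: first [ left; nra | right; left; nra | right; right; nra | lra ].
Qed.

(* The edge [(a,0), (0,b)] with [b <> 0] meets the x-axis only at [a], so
   x-axis vertices on both sides of [a] lie on both sides of its line. *)
Lemma not_convex_of_separating_edge n Q i j l a b c d :
  (i < n)%nat -> (j < n)%nat -> (l < n)%nat ->
  vtx n Q i = (a, 0) -> vtx n Q (i + 1) = (0, b) ->
  vtx n Q j = (c, 0) -> vtx n Q l = (d, 0) ->
  b <> 0 -> (c - a) * (d - a) < 0 -> ~ convex_polygon n Q.
Proof.
  intros Hi Hj Hl Ei Ei1 Ej El Hb Hsep [_ Hconv].
  specialize (Hconv i j l Hi Hj Hl).
  rewrite Ei, Ei1, Ej, El in Hconv. unfold cross, psub in Hconv; simpl in Hconv.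
  assert (0 < b * b) by (destruct (Rlt_le_dec b 0); nra).
  nra.
Qed.

Definition alt_index (k j : nat) : nat :=
  if Nat.eqb (j mod (2 * k)) 0 then (2 * k)%nat else (j mod (2 * k))%nat.

Lemma odd_double_add a r : Nat.odd (2 * a + r) = Nat.odd r.
Proof. rewrite Nat.odd_add, Nat.odd_mul. simpl. now destruct (Nat.odd r). Qed.

Lemma odd_mod_double k j : Nat.odd (j mod (2 * k)) = Nat.odd j.
Proof.
  rewrite (Nat.div_mod_eq j (2 * k)) at 2.
  now rewrite <- Nat.mul_assoc, odd_double_add.
Qed.

Lemma odd_alt_index k j : Nat.odd (alt_index k j) = Nat.odd j.
Proof.
  rewrite <- (odd_mod_double k j). unfold alt_index.
  destruct (Nat.eqb_spec (j mod (2 * k)) 0) as [E|E]; [|reflexivity].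
  rewrite E, Nat.odd_mul. reflexivity.
Qed.

Lemma odd_pred_cyclic k i : (1 <= k)%nat ->
  Nat.odd (i + 2 * k - 1) = negb (Nat.odd i).
Proof.
  intros Hk. replace (i + 2 * k - 1)%nat with (2 * (k - 1) + S i)%nat by lia.
  now rewrite odd_double_add, Nat.odd_succ, <- Nat.negb_odd.
Qed.

Lemma odd_succ_negb i : Nat.odd (i + 1) = negb (Nat.odd i).
Proof. now rewrite Nat.add_1_r, Nat.odd_succ, <- Nat.negb_odd. Qed.

Lemma alt_index_mod k j : (1 <= k)%nat -> alt_index k (j mod (2 * k)) = alt_index k j.
Proof. intros Hk. unfold alt_index. now rewrite Nat.Div0.mod_mod. Qed.

Lemma alt_index_inj k i j : (1 <= k)%nat ->
  alt_index k j = alt_index k i -> (j mod (2 * k) = i mod (2 * k))%nat.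
Proof.
  intros Hk. unfold alt_index.
  pose proof (Nat.mod_upper_bound j (2 * k)).
  pose proof (Nat.mod_upper_bound i (2 * k)).
  destruct (Nat.eqb_spec (j mod (2 * k)) 0), (Nat.eqb_spec (i mod (2 * k)) 0); lia.
Qed.

Lemma alt_index_small k j : (1 <= j <= 2 * k)%nat -> alt_index k j = j.
Proof.
  intros Hj. unfold alt_index.
  destruct (Nat.eq_dec j (2 * k)) as [->|E].
  - now rewrite Nat.Div0.mod_same.
  - rewrite Nat.mod_small by lia. destruct (Nat.eqb_spec j 0); lia.
Qed.

Section Alternating.

Variable k : nat.
Hypothesis Hk : (1 <= k)%nat.
Variables x y : nat -> R.

Definition alt_coord (s : nat -> R) (m : nat) : R :=
  s m * (if Nat.odd m then x ((m + 1) / 2)%nat else y (m / 2)%nat).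

Lemma alt_polygon_axis s j :
  alt_polygon k x y s j = axis_point (Nat.odd j) (alt_coord s (alt_index k j)).
Proof.
  rewrite <- (odd_alt_index k j). unfold alt_polygon, alt_coord, axis_point.
  fold (alt_index k j). now destruct (Nat.odd (alt_index k j)).
Qed.

Lemma alt_polygon_mod s j : alt_polygon k x y s (j mod (2 * k)) = alt_polygon k x y s j.
Proof. now rewrite !alt_polygon_axis, odd_mod_double, alt_index_mod. Qed.

Lemma alt_polygon_small s j : (1 <= j <= 2 * k)%nat ->
  alt_polygon k x y s j = axis_point (Nat.odd j) (alt_coord s j).
Proof. intros Hj. now rewrite alt_polygon_axis, alt_index_small. Qed.

Lemma alt_coord_flip_at s m m' :
  alt_coord (flip_at s m) m' = if Nat.eqb m' m then - alt_coord s m' else alt_coord s m'.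
Proof. unfold alt_coord, flip_at. destruct (Nat.eqb m' m); ring. Qed.

Lemma pop_alt_polygon s Q i :
  (forall j, Q j = alt_polygon k x y s j) -> pop_well_defined (2 * k) Q i ->
  forall j, pop (2 * k) Q i j = alt_polygon k x y (flip_at s (alt_index k i)) j.
Proof.
  intros HQ Hwd j. unfold pop.
  rewrite alt_polygon_axis, alt_coord_flip_at.
  destruct (Nat.eqb_spec (j mod (2 * k)) (i mod (2 * k))) as [E|E].
  - assert (Hidx : alt_index k j = alt_index k i)
      by now rewrite <- (alt_index_mod k j), E, alt_index_mod.
    assert (Hodd : Nat.odd j = Nat.odd i)
      by now rewrite <- (odd_mod_double k j), E, odd_mod_double.
    unfold pop_well_defined, prev_v, next_v, vtx in *.
    rewrite !HQ, !alt_polygon_mod, !alt_polygon_axis in *.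
    rewrite odd_pred_cyclic, odd_succ_negb in * by exact Hk.
    rewrite Hidx, Nat.eqb_refl, Hodd.
    apply reflect_axis_point. intros C. apply Hwd. now rewrite C.
  - rewrite HQ, alt_polygon_axis.
    destruct (Nat.eqb_spec (alt_index k j) (alt_index k i)) as [C|C]; [|reflexivity].
    exfalso. now apply E, alt_index_inj.
Qed.

Lemma pops_reach_alt_polygon sigma Q :
  sign_vector (2 * k) sigma -> pops_reach (2 * k) (alt_polygon k x y sigma) Q ->
  exists s, sign_vector (2 * k) s /\ forall j, Q j = alt_polygon k x y s j.
Proof.
  intros Hsigma HQ. induction HQ as [|Q i _ [s [Hs HQs]] _ Hwd].
  - now exists sigma.
  - exists (flip_at s (alt_index k i)). split.
    + now apply sign_vector_flip_at.
    + now apply pop_alt_polygon.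
Qed.

End Alternating.

Theorem theorem1 :
  forall (k : nat), (3 <= k)%nat ->
  forall P : nat -> point, in_alt_family k P ->
  forall Q : nat -> point, pops_reach (2 * k) P Q ->
  ~ convex_polygon (2 * k) Q.
Proof.
  intros k Hk P [x [y [sigma [Hpos [Hdist [Hsigma ->]]]]]] Q HQ.
  destruct (pops_reach_alt_polygon k ltac:(lia) x y sigma Q Hsigma HQ) as [s [Hs HQs]].
  assert (V : forall j, (1 <= j <= 2 * k)%nat ->
            vtx (2 * k) Q j = axis_point (Nat.odd j) (alt_coord x y s j)).
  { intros j Hj. unfold vtx. rewrite HQs, alt_polygon_mod, alt_polygon_small by lia.
    reflexivity. }
  assert (Hx : forall i j, (1 <= i <= 3)%nat -> (1 <= j <= 3)%nat -> i <> j ->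
             forall t u, (1 <= t <= 6)%nat -> (1 <= u <= 6)%nat -> s t * x i <> s u * x j).
  { intros i j Hi Hj Hij t u Ht Hu.
    apply signed_neq; [apply Hs; lia | apply Hs; lia | apply (Hpos i); lia
                      | apply (Hpos j); lia | apply (Hdist i j); lia]. }
  assert (Hy : forall j, (1 <= j <= 3)%nat -> forall t, (1 <= t <= 6)%nat -> s t * y j <> 0).
  { intros j Hj t Ht. apply signed_neq0; [apply Hs; lia | apply (Hpos j); lia]. }
  destruct (three_distinct_between (s 1%nat * x 1%nat) (s 3%nat * x 2%nat) (s 5%nat * x 3%nat))
    as [M|[M|M]]; try (apply Hx; lia).
  - apply (not_convex_of_separating_edge (2 * k) Q 3 1 5 _ (s 4%nat * y 2%nat) _ _
             ltac:(lia) ltac:(lia) ltac:(lia) (V 3%nat ltac:(lia)) (V 4%nat ltac:(lia))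
             (V 1%nat ltac:(lia)) (V 5%nat ltac:(lia))); [apply Hy; lia | exact M].
  - apply (not_convex_of_separating_edge (2 * k) Q 1 3 5 _ (s 2%nat * y 1%nat) _ _
             ltac:(lia) ltac:(lia) ltac:(lia) (V 1%nat ltac:(lia)) (V 2%nat ltac:(lia))
             (V 3%nat ltac:(lia)) (V 5%nat ltac:(lia))); [apply Hy; lia | exact M].
  - apply (not_convex_of_separating_edge (2 * k) Q 5 1 3 _ (s 6%nat * y 3%nat) _ _
             ltac:(lia) ltac:(lia) ltac:(lia) (V 5%nat ltac:(lia)) (V 6%nat ltac:(lia))
             (V 1%nat ltac:(lia)) (V 3%nat ltac:(lia))); [apply Hy; lia | exact M].
Qed.
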